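(* Let $k\ge1$, $a_i,b_i,c_i\in\mathbb{C}$ ($1\le i\le k$) with $\prod_{j=1}^kc_j\neq0$ and $\prod_{j=1}^kb_j\neq0$, let $T(f)$ be the tridiagonal $k$-Toeplitz operator on $\ell^2(\mathbb{N})$ with symbol $f$, and let $\lambda\in\mathbb{C}\setminus\sigma_{ess}(T(f))$. If $\sum_{j=1}^k\operatorname{wind}(\lambda_j(\mathbb{T}),\lambda)<0$, then there exist an eigenvector $\mathbf{x}\in\ell^2$ of $T(f)$ with eigenvalue $\lambda$ and some $\rho<1$ such that $$\frac{|\mathbf{x}_j|}{\max_i|\mathbf{x}_i|}\le C\,\lceil j/k\rceil\,\rho^{\lceil j/k\rceil-1},\qquad j\ge1,$$ where $C>0$ is a constant depending only on $\lambda$ and $a_p,b_p,c_p$, $1\le p\le k$.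
   Context: The tridiagonal $k$-Toeplitz operator $T(f)$ on $\ell^2(\mathbb{N})$ has matrix entries $(i,i)=a_{p(i)}$, $(i,i+1)=b_{p(i)}$, $(i+1,i)=c_{p(i)}$, $p(i)=((i-1)\bmod k)+1$, all other entries zero. Its symbol is $f(z)=A_{-1}z^{-1}+A_0+A_1z$, where $A_0$ is the $k\times k$ tridiagonal matrix with diagonal $a_1,\dots,a_k$, superdiagonal $b_1,\dots,b_{k-1}$, subdiagonal $c_1,\dots,c_{k-1}$; $A_{-1}$ has single nonzero entry $b_k$ at $(k,1)$; $A_1$ has single nonzero entry $c_k$ at $(1,k)$. $\mathbb{T}$ is the unit circle. $\sigma_{ess}(T(f))$ is the set of $\lambda$ with $T(f)-\lambda I$ not Fredholm. With $\lambda_1(z),\dots,\lambda_k(z)$ the eigenvalues of $f(z)$, $\sum_j\operatorname{wind}(\lambda_j(\mathbb{T}),\lambda)$ denotes the winding number about $0$ of $z\mapsto\det(f(z)-\lambda I)=\prod_j(\lambda_j(z)-\lambda)$ as $z$ traverses $\mathbb{T}$ counterclockwise. *)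

From HB Require Import structures.
From mathcomp Require Import all_boot all_order all_algebra.
From mathcomp Require Import all_classical all_reals all_analysis.
From mathcomp Require Import complex.
Set Implicit Arguments. Unset Strict Implicit. Unset Printing Implicit Defensive.
Import Order.TTheory GRing.Theory Num.Theory numFieldNormedType.Exports.
Local Open Scope ring_scope.
Local Open Scope classical_set_scope.

Definition cabs (R : realType) (z : R[i]) : R := ComplexField.Normc.normc z.

Definition expi (R : realType) (t : R) : R[i] := Complex (cos t) (sin t).

(* x is in l^2(N) (indices shifted: x n is the (n+1)-th coordinate) *)
Definition l2 (R : realType) (x : nat -> R[i]) : Prop :=
  (\sum_(n <oo) ((cabs (x n)) ^+ 2)%:E < +oo)%E.

Definition l2_cvg (R : realType) (y : nat -> nat -> R[i]) (x : nat -> R[i]) : Prop :=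
  (fun m => (\sum_(n <oo) ((cabs (y m n - x n)) ^+ 2)%:E)%E) @ \oo --> 0%E.

Definition lin_comb (R : realType) (s : seq (nat -> R[i])) (coef : nat -> R[i])
  : nat -> R[i] :=
  fun n => \sum_(i < size s) coef i * nth (fun _ => 0) s i n.

(* Fredholm operator on l^2(N): finite-dimensional kernel, closed range,
   finite-dimensional cokernel. *)
Definition fredholm (R : realType) (L : (nat -> R[i]) -> (nat -> R[i])) : Prop :=
  [/\ (exists s : seq (nat -> R[i]), (forall i, (i < size s)%N -> l2 (nth (fun _ => 0) s i)) /\
         forall x, l2 x -> L x = (fun _ => 0) -> exists coef, x = lin_comb s coef),
      (forall (xs : nat -> nat -> R[i]) (y : nat -> R[i]),
         (forall m, l2 (xs m)) -> l2 y -> l2_cvg (fun m => L (xs m)) y ->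
         exists x, l2 x /\ L x = y) &
      (exists s : seq (nat -> R[i]), (forall i, (i < size s)%N -> l2 (nth (fun _ => 0) s i)) /\
         forall y, l2 y -> exists x coef, l2 x /\ y = (fun n => L x n + lin_comb s coef n))].

Definition ess_spectrum (R : realType) (L : (nat -> R[i]) -> (nat -> R[i])) (lam : R[i])
  : Prop := ~ fredholm (fun x n => L x n - lam * x n).

(* tridiagonal k-Toeplitz operator, 0-indexed: row n has
   (n,n) = a_{p(n)}, (n,n+1) = b_{p(n)}, (n,n-1) = c_{p(n-1)},
   where coefficient a_p (1<=p<=k) of the paper is [a (p-1)] here
   and p(i) = ((i-1) mod k)+1 becomes n %% k. *)
Definition kToeplitz (R : realType) (k : nat) (a b c : nat -> R[i])
  (x : nat -> R[i]) : nat -> R[i] :=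
  fun n => (if n is n'.+1 then c (n' %% k)%N * x n' else 0)
           + a (n %% k)%N * x n + b (n %% k)%N * x n.+1.

Definition symA0 (R : realType) (k : nat) (a b c : nat -> R[i]) : 'M[R[i]]_k :=
  \matrix_(i, j) (if (i : nat) == j then a i
                  else if (j : nat) == i.+1 then b i
                  else if (i : nat) == j.+1 then c j else 0).
Definition symAm1 (R : realType) (k : nat) (b : nat -> R[i]) : 'M[R[i]]_k :=
  \matrix_(i, j) (if ((i : nat) == k.-1) && ((j : nat) == 0%N) then b k.-1 else 0).
Definition symA1 (R : realType) (k : nat) (c : nat -> R[i]) : 'M[R[i]]_k :=
  \matrix_(i, j) (if ((i : nat) == 0%N) && ((j : nat) == k.-1) then c k.-1 else 0).
Definition symbol (R : realType) (k : nat) (a b c : nat -> R[i]) (z : R[i])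
  : 'M[R[i]]_k :=
  z^-1 *: symAm1 k b + symA0 k a b c + z *: symA1 k c.

Definition winding_number (R : realType) (g : R -> R[i]) (w : int) : Prop :=
  (forall t : R, 0 <= t <= 1 -> g t != 0) /\
  exists theta : R -> R,
    [/\ {within `[(0 : R), 1], continuous theta},
        (forall t : R, 0 <= t <= 1 -> g t = ((cabs (g t))%:C)%C * expi (theta t)) &
        theta 1 - theta 0 = 2 * pi * w%:~R].

Definition char_curve (R : realType) (k : nat) (a b c : nat -> R[i]) (lam : R[i])
  (t : R) : R[i] :=
  \det (symbol k a b c (expi (2 * pi * t)) - lam%:M).

From HB Require Import structures.
From mathcomp Require Import all_boot all_order all_algebra.
From mathcomp Require Import all_classical all_reals all_analysis.
From mathcomp Require Import complex.
From mathcomp Require Import ring lra zify.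
Import Order.TTheory GRing.Theory Num.Theory numFieldNormedType.Exports.
Local Open Scope ring_scope.
Set Implicit Arguments. Unset Strict Implicit. Unset Printing Implicit Defensive.

(* Solving the eigenvalue equation of T(f) row by row gives a three-term
   recurrence with k-periodic coefficients, started from x_{-1} = 0, x_0 = 1.
   Over one period its solutions are transformed by a 2x2 monodromy matrix.  If
   mu is an eigenvalue of that matrix, the Bloch solution x_{n+k} = mu x_n is a
   kernel vector of f(1/mu) - lam, so 1/mu is a zero of the Laurent polynomial
   det(f(z) - lam) = al + be/z + ga z.  Factoring this polynomial at a zero z
   with |z| <= 1 shows that its winding number along the unit circle is 0 or 1,
   so a negative winding number puts both Floquet multipliers inside the open
   unit disk.  By Cayley-Hamilton each residue class mod k of the solution then
   obeys a constant-coefficient recurrence whose characteristic roots are the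
   multipliers; this gives the decay bound and, after absorbing its linear
   factor into a slightly larger ratio, square summability. *)

(** * The three-term recurrence *)

Section Recurrence.
Variables (F : fieldType) (k : nat) (a b c : nat -> F) (lam : F).

(* Row [n] of [(T(f) - lam) x = 0] solved for [x_{n+1}], where [s n.+1 = x_n]
   and [s 0] is a ghost entry (0 for an eigenvector); writing the subdiagonal
   coefficient as [c ((n + k.-1) %% k)] makes the recurrence k-periodic. *)
Definition eigen_rec (s : nat -> F) := forall n,
  s n.+2 = ((lam - a (n %% k)) * s n.+1 - c ((n + k.-1) %% k) * s n) / b (n %% k).

Fixpoint rec_sol (p q : F) (n : nat) : F :=
  match n with
  | 0 => p
  | 1 => q
  | (n'.+1 as m).+1 =>
      ((lam - a (n' %% k)) * rec_sol p q m - c ((n' + k.-1) %% k) * rec_sol p q n')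
        / b (n' %% k)
  end.

Lemma rec_sol_rec p q : eigen_rec (rec_sol p q).
Proof. by []. Qed.

Lemma eigen_rec_eq s s' : eigen_rec s -> eigen_rec s' ->
  s 0 = s' 0 -> s 1 = s' 1 -> s =1 s'.
Proof.
move=> hs hs' h0 h1.
suff H n : s n = s' n /\ s n.+1 = s' n.+1 by move=> n; case: (H n).
by elim: n => [|n [IH1 IH2]] //; rewrite hs hs' IH1 IH2.
Qed.

Lemma eigen_rec_lin s s' (al be : F) : eigen_rec s -> eigen_rec s' ->
  eigen_rec (fun n => al * s n + be * s' n).
Proof. by move=> hs hs' n; rewrite hs hs'; ring. Qed.

Lemma eigen_rec_addk s : (0 < k)%N -> eigen_rec s -> eigen_rec (fun n => s (n + k)%N).
Proof.
move=> k0 hs n /=; have -> : (n.+2 + k = (n + k).+2)%N by lia.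
have -> : (n.+1 + k = (n + k).+1)%N by lia.
by rewrite hs modnDr -addnA (addnC k) addnA modnDr.
Qed.

Lemma eigen_rec_eq0 s : eigen_rec s -> s 0 = 0 -> s 1 = 0 -> s =1 (fun=> 0).
Proof. by move=> hs; apply: eigen_rec_eq => // n; rewrite mulr0 mulr0 subrr mul0r. Qed.

Lemma eigen_rec_basis s : eigen_rec s ->
  s =1 (fun n => s 0 * rec_sol 1 0 n + s 1 * rec_sol 0 1 n).
Proof.
move=> hs; apply: eigen_rec_eq => //=; first exact: eigen_rec_lin.
- by rewrite mulr1 mulr0 addr0.
- by rewrite mulr0 mulr1 add0r.
Qed.

(* Trace and determinant of the monodromy matrix, which maps [(s 0, s 1)] to
   [(s k, s k.+1)]. *)
Definition mono_tr := rec_sol 1 0 k + rec_sol 0 1 k.+1.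
Definition mono_det := rec_sol 1 0 k * rec_sol 0 1 k.+1 - rec_sol 0 1 k * rec_sol 1 0 k.+1.

Lemma eigen_rec_cayley_hamilton s : (0 < k)%N -> eigen_rec s ->
  forall n, s (n + 2 * k)%N = mono_tr * s (n + k)%N - mono_det * s n.
Proof.
move=> k0 hs; have hsk := eigen_rec_addk k0 hs.
set u := fun n => 1 * (1 * s (n + k + k)%N + - mono_tr * s (n + k)%N) + mono_det * s n.
have hu : eigen_rec u.
  by apply: eigen_rec_lin => //; apply: eigen_rec_lin => //; exact: (eigen_rec_addk k0 hsk).
have [P0 P1] := (eigen_rec_basis hs k, eigen_rec_basis hs k.+1).
have Q0 : s (k + k)%N = s k * rec_sol 1 0 k + s k.+1 * rec_sol 0 1 k :=
  eigen_rec_basis hsk k.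
have Q1 : s (k.+1 + k)%N = s k * rec_sol 1 0 k.+1 + s k.+1 * rec_sol 0 1 k.+1 :=
  eigen_rec_basis hsk k.+1.
have u0 : u =1 (fun=> 0).
  by apply: eigen_rec_eq0; rewrite // /u ?add0n ?add1n ?Q0 ?Q1 P0 P1 /mono_tr /mono_det; ring.
move=> n; apply/eqP; rewrite mul2n -addnn addnA -subr_eq0; apply/eqP.
by rewrite -(u0 n) /u; ring.
Qed.

End Recurrence.

(** * Floquet solutions and zeros of the symbol *)

Lemma eigenvector2 (F : fieldType) (x11 x12 x21 x22 mu : F) :
  mu ^+ 2 - (x11 + x22) * mu + (x11 * x22 - x12 * x21) = 0 ->
  exists p q : F, [/\ (p, q) != (0, 0),
    x11 * p + x12 * q = mu * p & x21 * p + x22 * q = mu * q].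
Proof.
move=> hmu; have [x12_0|x12_0] := eqVneq x12 0; last first.
  exists x12, (mu - x11); split; first by rewrite xpair_eqE negb_and x12_0.
    by ring.
  by rewrite -[LHS]addr0 -hmu; ring.
have [x21_0|x21_0] := eqVneq x21 0; last first.
  exists (mu - x22), x21; split; first by rewrite xpair_eqE negb_and x21_0 orbT.
    by rewrite -[LHS]addr0 -hmu x12_0; ring.
  by ring.
have : (mu - x11) * (mu - x22) = 0 by rewrite -hmu x12_0 x21_0; ring.
move/eqP; rewrite mulf_eq0 !subr_eq0 => /orP[/eqP->|/eqP->].
  by exists 1, 0; rewrite xpair_eqE oner_eq0 x21_0; split => //; ring.
by exists 0, 1; rewrite xpair_eqE oner_eq0 andbF x12_0; split => //; ring.
Qed.

Section Floquet.
Variables (F : fieldType) (k : nat) (a b c : nat -> F) (lam : F).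
Hypothesis k_gt0 : (0 < k)%N.
Local Notation eigen_rec := (eigen_rec k a b c lam).
Local Notation rec_sol := (rec_sol k a b c lam).

Lemma floquet_solution mu :
  mu ^+ 2 - mono_tr k a b c lam * mu + mono_det k a b c lam = 0 ->
  exists s, [/\ eigen_rec s, (s 0, s 1) != (0, 0) & forall n, s (n + k)%N = mu * s n].
Proof.
move=> /eigenvector2 [p [q [pq0 e0 e1]]].
set s := rec_sol p q; have hs : eigen_rec s := rec_sol_rec k a b c lam p q.
exists s; split=> // n; rewrite -[RHS]addr0 -(mul0r (s n)).
apply: (eigen_rec_eq (eigen_rec_addk k_gt0 hs) (eigen_rec_lin _ _ hs hs)) => /=.
- by rewrite (eigen_rec_basis hs) mul0r addr0 -e0 mulrC (mulrC q).
- by rewrite (eigen_rec_basis hs) mul0r addr0 -e1 mulrC (mulrC q).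
Qed.

End Floquet.

Section SymbolAction.
Variables (R : realType) (k : nat) (a b c : nat -> R[i]) (f : nat -> R[i]).
Local Notation u := (\col_(j < k) f j).

Lemma symA0E (i j : 'I_k) : symA0 k a b c i j =
  (if j == i :> nat then a i else 0) + (if j == i.+1 :> nat then b i else 0)
  + (if i == j.+1 :> nat then c j else 0).
Proof.
rewrite mxE; case: (ltngtP i j) => [ij|ji|/val_inj ->].
- by rewrite (ltn_eqF (leqW ij)) add0r addr0.
- by rewrite (ltn_eqF (leqW ji)) !add0r.
- by rewrite (ltn_eqF (ltnSn _)) !addr0.
Qed.

Lemma symA0_mulmx (i : 'I_k) : (symA0 k a b c *m u) i 0 =
  a i * f i + (if (i.+1 < k)%N then b i * f i.+1 else 0)
  + (if i == 0 :> nat then 0 else c i.-1 * f i.-1).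
Proof.
rewrite mxE (eq_bigr (fun j : 'I_k => (if j == i :> nat then a i * f j else 0)
   + (if j == i.+1 :> nat then b i * f j else 0)
   + (if i == j.+1 :> nat then c j * f j else 0))); last first.
  by move=> j _; rewrite symA0E mxE !mulrDl; congr (_ + _ + _); case: ifP; rewrite ?mul0r.
rewrite !big_split /= -!big_mkcond (big_ord1_eq _ (fun j => a i * f j))
  (big_ord1_eq _ (fun j => b i * f j)) ltn_ord; congr (_ + _).
case: i => [[|i'] /= hi]; first by rewrite big1.
by under eq_bigl => j do rewrite eqSS eq_sym; rewrite (big_ord1_eq _ (fun j => c j * f j)) ltnW.
Qed.

Lemma symAm1_mulmx (i : 'I_k) :
  (symAm1 k b *m u) i 0 = if i == k.-1 :> nat then b k.-1 * f 0 else 0.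
Proof.
rewrite mxE (eq_bigr (fun j : 'I_k =>
  if (i == k.-1 :> nat) && (j == 0 :> nat) then b k.-1 * f j else 0)); last first.
  by move=> j _; rewrite !mxE; case: ifP; rewrite ?mul0r.
case: eqP => _ /=; last by rewrite big1.
by rewrite -big_mkcond (big_ord1_eq _ (fun j => b k.-1 * f j)) (leq_ltn_trans _ (ltn_ord i)).
Qed.

Lemma symA1_mulmx (i : 'I_k) :
  (symA1 k c *m u) i 0 = if i == 0 :> nat then c k.-1 * f k.-1 else 0.
Proof.
rewrite mxE (eq_bigr (fun j : 'I_k =>
  if (i == 0 :> nat) && (j == k.-1 :> nat) then c k.-1 * f j else 0)); last first.
  by move=> j _; rewrite !mxE; case: ifP; rewrite ?mul0r.
case: eqP => _ /=; last by rewrite big1.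
rewrite -big_mkcond (big_ord1_eq _ (fun j => c k.-1 * f j)).
by rewrite ltn_predL (leq_ltn_trans _ (ltn_ord i)).
Qed.

Lemma symbol_mulmx (z lam : R[i]) (i : 'I_k) :
  ((symbol k a b c z - lam%:M) *m u) i 0 =
  (a i - lam) * f i + (if (i.+1 < k)%N then b i * f i.+1 else z^-1 * b i * f 0)
  + (if i == 0 :> nat then z * c k.-1 * f k.-1 else c i.-1 * f i.-1).
Proof.
have hb : (if (i.+1 < k)%N then b i * f i.+1 else 0)
    + z^-1 * (if i == k.-1 :> nat then b k.-1 * f 0 else 0)
    = if (i.+1 < k)%N then b i * f i.+1 else z^-1 * b i * f 0.
  have ik := ltn_ord i; case: ltnP => h.
    have -> : (i == k.-1 :> nat) = false by apply/eqP; lia.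
    by rewrite mulr0 addr0.
  have -> : (i : nat) = k.-1 by lia.
  by rewrite eqxx add0r mulrA.
have hc : (if i == 0 :> nat then 0 else c i.-1 * f i.-1)
    + z * (if i == 0 :> nat then c k.-1 * f k.-1 else 0)
    = if i == 0 :> nat then z * c k.-1 * f k.-1 else c i.-1 * f i.-1.
  by case: ifP; rewrite ?mulr0 ?addr0 ?add0r ?mulrA.
rewrite /symbol !mulmxBl !mulmxDl -!scalemxAl mul_scalar_mx.
have := (symA0_mulmx i, symAm1_mulmx i, symA1_mulmx i).
move: (symA0 _ _ _ _ *m _) (symAm1 _ _ *m _) (symA1 _ _ *m _) => A0u Am1u A1u [[e0 em1] e1].
by rewrite !mxE e0 em1 e1 -hb -hc; ring.
Qed.

End SymbolAction.

Section FloquetSymbol.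
Variables (R : realType) (k : nat) (a b c : nat -> R[i]) (lam : R[i]).
Hypotheses (k_gt0 : (0 < k)%N) (b_neq0 : forall j, (j < k)%N -> b j != 0).

Lemma floquet_symbol_det s mu : mu != 0 -> eigen_rec k a b c lam s ->
  (s 0, s 1) != (0, 0) -> (forall n, s (n + k)%N = mu * s n) ->
  \det (symbol k a b c mu^-1 - lam%:M) = 0.
Proof.
move=> mu0 hs s01 hmu.
have sk : s k = mu * s 0 by rewrite -[k]add0n hmu.
have skp : s k.+1 = mu * s 1 by rewrite -add1n hmu.
set u := \col_(j < k) s j.+1.
(* The corner entries of the symbol are matched by [s (n + k) = mu * s n]. *)
have Au : (symbol k a b c mu^-1 - lam%:M) *m u = 0.
  apply/matrixP => i j; rewrite ord1 (symbol_mulmx a b c (fun n => s n.+1)) invrK mxE.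
  have ik := ltn_ord i.
  have hB : (if (i.+1 < k)%N then b i * s i.+2 else mu * b i * s 1)
      = b i * s i.+2.
    case: (ltnP i.+1 k) => // ik1; have -> : (i : nat) = k.-1 by lia.
    by rewrite prednK // skp; ring.
  have hC : (if i == 0 :> nat then mu^-1 * c k.-1 * s k.-1.+1 else c i.-1 * s i.-1.+1)
      = c ((i + k.-1) %% k)%N * s i.
    case: eqP => [->|i0].
      by rewrite add0n modn_small ?ltn_predL // prednK // sk mulrAC mulKf // mulrC.
    have -> : (i + k.-1 = i.-1 + k)%N by lia.
    by rewrite modnDr modn_small ?prednK //; lia.
  rewrite hB hC; have := hs i; rewrite modn_small // => ->.
  by rewrite (mulrC (b i)) divfK ?b_neq0 //; ring.
have u0 : u != 0.
  apply: contraNneq s01 => /matrixP u0; rewrite xpair_eqE.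
  have uj n : (n < k)%N -> s n.+1 = 0 by move=> nk; have := u0 (Ordinal nk) 0; rewrite !mxE.
  rewrite uj // eqxx andbT.
  have := sk; rewrite -[k in s k]prednK // uj ?ltn_predL // => /esym/eqP.
  by rewrite mulf_eq0 (negbTE mu0).
rewrite -det_tr; apply/eqP/det0P; exists u^T; first by rewrite trmx_eq0.
by rewrite -trmx_mul Au trmx0.
Qed.
End FloquetSymbol.

Lemma det_addZ_row (F : comPzRingType) n (A G : 'M[F]_n) (r : 'I_n) z :
  (forall i j, i != r -> G i j = 0) ->
  \det (A + z *: G) = \det A + z * \det (\matrix_(i, j) if i == r then G i j else A i j).
Proof.
move=> Gr; rewrite -[\det A]mul1r; apply: (determinant_multilinear (i0 := r)).
- by apply/matrixP => i j; rewrite !mxE eqxx mul1r.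
- by apply/matrixP => i j; rewrite !mxE Gr ?mulr0 ?addr0 // eq_sym neq_lift.
- apply/matrixP => i j; rewrite !mxE eq_sym (negbTE (neq_lift _ _)).
  by rewrite Gr ?mulr0 ?addr0 // eq_sym neq_lift.
Qed.

Lemma det_addZ_rows (F : comPzRingType) n (D E G : 'M[F]_n) (r0 r1 : 'I_n) :
  (forall i j, i != r1 -> E i j = 0) -> (forall i j, i != r0 -> G i j = 0) ->
  exists al be ga de : F, forall w z,
    \det (D + w *: E + z *: G) = al + be * w + ga * z + de * (w * z).
Proof.
move=> Er Gr.
set DG := \matrix_(i, j) if i == r0 then G i j else D i j.
set E' := \matrix_(i, j) if i == r0 then 0 else E i j.
have E'r i j : i != r1 -> E' i j = 0 by move=> ?; rewrite mxE Er ?if_same.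
exists (\det D), (\det (\matrix_(i, j) if i == r1 then E i j else D i j)),
  (\det DG), (\det (\matrix_(i, j) if i == r1 then E' i j else DG i j)) => w z.
rewrite (det_addZ_row _ _ Gr).
have -> : \matrix_(i, j) (if i == r0 then G i j else (D + w *: E) i j) = DG + w *: E'.
  by apply/matrixP => i j; rewrite !mxE; case: (i == r0); rewrite ?mulr0 ?addr0.
by rewrite (det_addZ_row _ _ Er) (det_addZ_row _ _ E'r); ring.
Qed.

Lemma det_symbol_laurent (R : realType) (k : nat) (a b c : nat -> R[i]) (lam : R[i]) :
  (0 < k)%N -> exists al be ga : R[i], forall z, z != 0 ->
    \det (symbol k a b c z - lam%:M) = al + be * z^-1 + ga * z.
Proof.
move=> k0; have k1 : (k.-1 < k)%N by rewrite ltn_predL.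
have Am1r (i : 'I_k) j : i != Ordinal k1 -> symAm1 k b i j = 0.
  by rewrite mxE; case: ifP => // /andP[/eqP ik _] /eqP[]; apply: val_inj.
have A1r (i : 'I_k) j : i != Ordinal k0 -> symA1 k c i j = 0.
  by rewrite mxE; case: ifP => // /andP[/eqP ik _] /eqP[]; apply: val_inj.
have [al [be [ga [de H]]]] := det_addZ_rows (symA0 k a b c - lam%:M) Am1r A1r.
exists (al + de), be, ga => z z0.
have -> : symbol k a b c z - lam%:M
    = symA0 k a b c - lam%:M + z^-1 *: symAm1 k b + z *: symA1 k c.
  by apply/matrixP => i j; rewrite !mxE; ring.
by rewrite H mulVf //; ring.
Qed.

(** * Winding numbers of Laurent polynomials on the unit circle *)

Section Modulus.
Variable R : realType.
Implicit Types x y z : R[i].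
Local Open Scope complex_scope.

Lemma cabs_ge0 z : 0 <= cabs z.
Proof. by case: z => u v; rewrite /cabs /= sqrtr_ge0. Qed.

Lemma cabs_eq0 z : (cabs z == 0) = (z == 0).
Proof.
apply/eqP/eqP => [|->]; first exact: ComplexField.Normc.eq0_normc.
exact: ComplexField.Normc.normc0.
Qed.

Lemma cabs_gt0 z : (0 < cabs z) = (z != 0).
Proof. by rewrite lt_neqAle cabs_ge0 andbT eq_sym cabs_eq0. Qed.

Lemma cabsM x y : cabs (x * y) = cabs x * cabs y.
Proof. exact: ComplexField.Normc.normcM. Qed.

Lemma cabsV z : cabs z^-1 = (cabs z)^-1.
Proof. exact: ComplexField.Normc.normcV. Qed.

Lemma cabsN z : cabs (- z) = cabs z.
Proof. exact: normcN. Qed.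

Lemma cabs1 : cabs (1 : R[i]) = 1.
Proof. exact: ComplexField.Normc.normc1. Qed.

Lemma cabsX z n : cabs (z ^+ n) = cabs z ^+ n.
Proof. by elim: n => [|n IH]; rewrite ?expr0 ?cabs1 // !exprS cabsM IH. Qed.

Lemma cabsD x y : cabs (x + y) <= cabs x + cabs y.
Proof. exact: le_normcD. Qed.

Lemma cabs_real (r : R) : 0 <= r -> cabs r%:C = r.
Proof. by move=> r0; rewrite /cabs /= expr0n /= addr0 sqrtr_sqr ger0_norm. Qed.

Lemma realC_eq0 (r : R) : (r%:C == 0 :> R[i]) = (r == 0).
Proof. by rewrite -(inj_eq (@complexI R)). Qed.

End Modulus.

Section ComplexExponential.
Variable R : realType.
Implicit Types x y t : R.
Local Open Scope complex_scope.

Lemma expiD x y : expi (x + y) = expi x * expi y.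
Proof. by rewrite /expi; simpc; rewrite cosD sinD; congr (_ +i* _); ring. Qed.

Lemma cabs_expi x : cabs (expi x) = 1.
Proof. by rewrite /cabs /expi /= cos2Dsin2 sqrtr1. Qed.

Lemma expi_neq0 x : expi x != 0.
Proof. by rewrite -cabs_eq0 cabs_expi oner_eq0. Qed.

Lemma expiN x : expi (- x) = (expi x)^-1.
Proof.
apply: (mulIf (expi_neq0 x)); rewrite -expiD addNr mulVf ?expi_neq0 //.
by rewrite /expi cos0 sin0.
Qed.

Lemma expi_eq_small x y : `|y| <= pi -> expi (x + y) = expi x -> y = 0.
Proof.
move=> ypi; rewrite expiD -[RHS]mulr1 => /(mulfI (expi_neq0 x)) [cy _].
have cny : cos `|y| = 1 by case: (ler0P y) => _; rewrite ?cosN.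
apply/normr0_eq0/(@cos_inj R); rewrite ?in_itv /= ?normr_ge0 ?lexx ?pi_ge0 //.
by rewrite cny cos0.
Qed.

Lemma expi_lift_const (h : R -> R) : {within `[0, 1], continuous h}%classic ->
  (forall t, 0 <= t <= 1 -> expi (h t) = expi (h 0)) -> h 1 = h 0.
Proof.
move=> hc he.
(* If [h 1 != h 0], the IVT yields [t] with [0 < |h t - h 0| <= pi]. *)
have key y : Num.min (h 0) (h 1) <= y <= Num.max (h 0) (h 1) -> `|y - h 0| <= pi -> y = h 0.
  move=> hy ypi; have [t] := IVT ler01 hc hy; rewrite in_itv /= => t01 hty.
  apply/eqP; rewrite -subr_eq0; apply/eqP/(expi_eq_small (x := h 0) ypi).
  by rewrite subrKC -hty he.
have pi0 := pi_gt0 R.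
have [h01|h10|//] := ltgtP (h 0) (h 1).
- set d := Num.min (h 1 - h 0) pi.
  have [d0 d1 d2] : [/\ 0 < d, d <= h 1 - h 0 & d <= pi].
    by split; rewrite /d ?lt_min ?subr_gt0 ?h01 ?pi0 ?ge_min ?lexx ?orbT.
  have : h 0 + d = h 0.
    apply: key; last by rewrite (addrC (h 0)) addrK ger0_norm // ltW.
    by rewrite min_l ?max_r ?(ltW h01) //; apply/andP; split; lra.
  lra.
- set d := Num.min (h 0 - h 1) pi.
  have [d0 d1 d2] : [/\ 0 < d, d <= h 0 - h 1 & d <= pi].
    by split; rewrite /d ?lt_min ?subr_gt0 ?h10 ?pi0 ?ge_min ?lexx ?orbT.
  have : h 0 - d = h 0.
    apply: key; last by rewrite addrAC subrr add0r normrN ger0_norm // ltW.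
    by rewrite min_r ?max_l ?(ltW h10) //; apply/andP; split; lra.
  lra.
Qed.

Lemma polar_atan (u v : R) : 0 < u ->
  u +i* v = (cabs (u +i* v))%:C * expi (atan (v / u)).
Proof.
move=> u0; rewrite /cabs /expi /=; simpc.
set x := v / u.
have sq0 : 0 < Num.sqrt (1 + x ^+ 2) by rewrite sqrtr_gt0 ltr_wpDr ?sqr_ge0.
have hc : cos (atan x) = (Num.sqrt (1 + x ^+ 2))^-1 by rewrite cos_atan.
have hs : sin (atan x) = x * cos (atan x).
  by rewrite -[X in X * _](atanK x) /tan divfK // hc invr_eq0 gt_eqF.
have hsq : Num.sqrt (u ^+ 2 + v ^+ 2) = u * Num.sqrt (1 + x ^+ 2).
  rewrite (_ : u ^+ 2 + v ^+ 2 = u ^+ 2 * (1 + x ^+ 2)); last by rewrite /x; field; rewrite gt_eqF.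
  by rewrite sqrtrM ?sqr_ge0 // sqrtr_sqr ger0_norm // ltW.
rewrite hs hc hsq; congr (_ +i* _); rewrite /x; field; by rewrite !gt_eqF.
Qed.

Lemma expi_onto_circle (z : R[i]) : cabs z = 1 ->
  exists2 t, 0 <= t <= 1 & expi (2 * pi * t) = z.
Proof.
case: z => x y; rewrite /cabs /= => h.
have h1 : x ^+ 2 + y ^+ 2 = 1.
  by rewrite -[LHS]sqr_sqrtr ?h ?expr1n // addr_ge0 // sqr_ge0.
have hx : -1 <= x <= 1 by apply/andP; split; nra.
have [_ cx] := acos_def hx.
have pi0 := pi_gt0 R.
have sx : sin (acos x) = `|y|.
  by rewrite sin_acos // (_ : 1 - x ^+ 2 = y ^+ 2) ?sqrtr_sqr //; lra.
have acos_pi : 0 <= acos x / (2 * pi) <= 1 / 2.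
  have [a0 api] := acos_def hx; move: a0 => /andP[a0 api'].
  by rewrite divr_ge0 ?ler_pdivrMr /=; lra.
have [y0|y0] := leP 0 y.
  exists (acos x / (2 * pi)); first lra.
  by rewrite mulrC divfK ?gt_eqF ?mulr_gt0 // /expi cx sx ger0_norm.
exists (1 - acos x / (2 * pi)); first lra.
rewrite mulrBr mulr1 mulrCA mulfV ?gt_eqF ?mulr_gt0 // mulr1.
rewrite /expi cosB sinB mulr_natl cos2pi sin2pi cx sx ltr0_norm //.
by congr (_ +i* _); ring.
Qed.

End ComplexExponential.

Section Winding.
Variable R : realType.
Local Open Scope complex_scope.

Lemma cabs_one_add_gt0 (z : R[i]) (x : R) : cabs z < 1 -> 0 < cabs (1 + z * expi x).
Proof.
move=> z1; rewrite cabs_gt0; apply: contraTneq z1 => h.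
have -> : cabs z = cabs (z * expi x) by rewrite cabsM cabs_expi mulr1.
by rewrite -[z * _](addKr 1) h addr0 cabsN cabs1 ltxx.
Qed.

Lemma one_add_expi_lift (z : R[i]) (s : R) : cabs z < 1 -> cos s = 1 ->
  exists l : R -> R, [/\ continuous l, l 1 = l 0 &
    forall t, 1 + z * expi (s * t) = (cabs (1 + z * expi (s * t)))%:C * expi (l t)].
Proof.
case: z => u v z1 cs1.
have {}z1 : u ^+ 2 + v ^+ 2 < 1 by move: z1; rewrite /cabs /= -{1}sqrtr1 ltr_sqrt.
set P := fun t => 1 + (u * cos (s * t) - v * sin (s * t)).
set Q := fun t => u * sin (s * t) + v * cos (s * t).
have PQ t : 1 + (u +i* v) * expi (s * t) = P t +i* Q t.
  by rewrite /expi /P /Q; simpc; congr (_ +i* _); ring.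
have P0 t : 0 < P t.
  have := cos2Dsin2 (s * t); rewrite /P; set C := cos _; set S := sin _ => cs.
  have : (u * C - v * S) ^+ 2 + (u * S + v * C) ^+ 2 = u ^+ 2 + v ^+ 2.
    by rewrite -[RHS]mulr1 -cs; ring.
  have := sqr_ge0 (u * S + v * C); nra.
(* The real part [P] stays positive, so [atan (Q / P)] is a continuous argument. *)
exists (fun t => atan (Q t / P t)); split.
- move=> x; have cst (y : R) : {for x, continuous (fun=> y)} by exact: cst_continuous.
  have cs : {for x, continuous (fun t : R => s * t)}.
    by apply: continuousM; [exact: cst | exact: cvg_id].
  have cc := continuous_comp cs (@continuous_cos R _).
  have ss := continuous_comp cs (@continuous_sin R _).
  have cQ : {for x, continuous Q} :=
    continuousD (continuousM (cst u) ss) (continuousM (cst v) cc).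
  have cP : {for x, continuous P} :=
    continuousD (cst 1) (continuousB (continuousM (cst u) cc) (continuousM (cst v) ss)).
  exact: continuous_comp (continuousM cQ (continuousV (lt0r_neq0 (P0 x)) cP))
    (@continuous_atan R _).
- have ss : sin s = 0.
    by apply/eqP; rewrite -sqrf_eq0; have := cos2Dsin2 s; rewrite cs1 expr1n; lra.
  by rewrite /P /Q !mulr1 !mulr0 cs1 ss cos0 sin0.
- by move=> t; rewrite PQ; apply: polar_atan.
Qed.

Lemma winding_number_lift (g : R -> R[i]) (w : int) (K : R[i]) (N L : R -> R) :
  winding_number g w -> K != 0 -> {within `[0, 1], continuous L}%classic ->
  (forall t, 0 <= t <= 1 -> 0 < N t /\ g t = K * (N t)%:C * expi (L t)) ->
  L 1 - L 0 = 2 * pi * w%:~R.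
Proof.
move=> [_ [th [thc thpol <-]]] K0 Lc hL.
suff: th 1 - L 1 = th 0 - L 0 by lra.
have key t : 0 <= t <= 1 -> expi (th t - L t) = K / (cabs K)%:C.
  move=> t01; have [N0 gt] := hL t t01; have := thpol t t01.
  rewrite gt !cabsM cabs_expi mulr1 cabs_real ?ltW // => e.
  have eC : ((cabs K * N t)%:C : R[i]) = (cabs K)%:C * (N t)%:C by rewrite rmorphM.
  have cK : (cabs K)%:C != 0 by rewrite realC_eq0 cabs_eq0.
  have cN : (N t)%:C != 0 by rewrite realC_eq0 gt_eqF.
  have eL := expi_neq0 (L t).
  have eth : expi (th t) = K * (N t)%:C * expi (L t) / ((cabs K)%:C * (N t)%:C).
    by rewrite e eC; field; apply/andP; split.
  by rewrite expiD expiN eth; field; apply/and3P; split.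
have := expi_lift_const (h := fun t => th t - L t) (within_continuousB thc Lc).
by apply=> t t01; rewrite !key // lexx ler01.
Qed.

End Winding.

Lemma laurent_factor (F : fieldType) (al be ga z y : F) : z != 0 -> y != 0 ->
  al + be * z^-1 + ga * z = 0 ->
  al + be * y^-1 + ga * y = (1 - z * y^-1) * (ga * y + (al + ga * z)).
Proof.
move=> z0 y0 root.
have -> : be = - ((al + ga * z) * z).
  apply: (mulIf (invr_neq0 z0)); rewrite mulNr -mulrA mulfV // mulr1.
  by rewrite -[LHS]subr0 -root; ring.
by field.
Qed.

Section Laurent.
Variable R : realType.
Local Open Scope complex_scope.
Local Notation e t := (expi (2 * pi * t)).

Lemma winding_number_factors (g : R -> R[i]) (w m : int) (K z1 z2 : R[i]) (s1 s2 : R) :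
  winding_number g w -> K != 0 -> cabs z1 < 1 -> cabs z2 < 1 ->
  cos s1 = 1 -> cos s2 = 1 ->
  (forall t, 0 <= t <= 1 -> g t = K * expi (2 * pi * m%:~R * t)
     * ((1 + z1 * expi (s1 * t)) * (1 + z2 * expi (s2 * t)))) ->
  w = m.
Proof.
move=> gw K0 z1lt z2lt c1 c2 hg.
have [l1 [l1c l1p l1e]] := one_add_expi_lift z1lt c1.
have [l2 [l2c l2p l2e]] := one_add_expi_lift z2lt c2.
set L := fun t => 2 * pi * m%:~R * t + l1 t + l2 t.
have Lc : continuous L.
  move=> x; have cst (y : R) : {for x, continuous (fun=> y)} by exact: cst_continuous.
  exact: continuousD (continuousD (continuousM (cst _) cvg_id) (l1c x)) (l2c x).
set N := fun t => cabs (1 + z1 * expi (s1 * t)) * cabs (1 + z2 * expi (s2 * t)).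
have hL t : 0 <= t <= 1 -> 0 < N t /\ g t = K * (N t)%:C * expi (L t).
  move=> t01; split; first by rewrite mulr_gt0 ?cabs_one_add_gt0.
  by rewrite hg // {1}l1e {1}l2e rmorphM /L !expiD; ring.
have := winding_number_lift gw K0 (continuous_subspaceT Lc) hL.
rewrite /L l1p l2p mulr1 mulr0 => hw.
have : 2 * pi * m%:~R = 2 * pi * w%:~R :> R by rewrite -hw; ring.
have pi2 : 2 * pi != 0 :> R by rewrite mulf_neq0 ?pnatr_eq0 ?gt_eqF ?pi_gt0.
by move/(mulfI pi2)/eqP; rewrite eqr_int => /eqP.
Qed.

Lemma laurent_winding_ge0 (g : R -> R[i]) (al be ga z : R[i]) (w : int) :
  (forall t, g t = al + be * (e t)^-1 + ga * e t) -> winding_number g w ->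
  z != 0 -> cabs z <= 1 -> al + be * z^-1 + ga * z = 0 -> 0 <= w.
Proof.
move=> hg gw z0 z1 root; have gnz := gw.1.
have e0 (t : R) : e t != 0 by exact: expi_neq0.
have einv (t : R) : expi (- (2 * pi) * t) = (e t)^-1 by rewrite mulNr expiN.
have cos2pi : cos (2 * pi) = 1 :> R by rewrite mulr_natl cos2pi.
have cos2piN : cos (- (2 * pi)) = 1 :> R by rewrite cosN.
(* The first factor has winding number 0, the second one 0 or 1 depending on
   which of [ga] and [D] is larger, unless a factor vanishes on the circle. *)
set D := al + ga * z.
have fact t : g t = (1 + (- z) * expi (- (2 * pi) * t)) * (ga * e t + D).
  by rewrite hg (laurent_factor z0 (e0 t) root) einv mulNr.
have [z_lt1|z_ge1] := ltP (cabs z) 1; last first.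
  have [t t01 et] : exists2 t, 0 <= t <= 1 & e t = z.
    by apply: expi_onto_circle; apply/le_anti; rewrite z1.
  by have := gnz t t01; rewrite fact einv et mulNr mulfV // subrr mul0r eqxx.
have mz_lt1 : cabs (- z) < 1 by rewrite cabsN.
have [gaD|Dga|gaD] := ltgtP (cabs ga) (cabs D).
- have D0 : D != 0 by rewrite -cabs_gt0 (le_lt_trans (cabs_ge0 _) gaD).
  have gD : cabs (ga / D) < 1 by rewrite cabsM cabsV ltr_pdivrMr ?mul1r ?cabs_gt0.
  rewrite (winding_number_factors (m := 0) gw D0 mz_lt1 gD cos2piN cos2pi) // => t t01.
  by rewrite fact mulr0 mul0r /expi cos0 sin0 mulr1; field.
- have ga0 : ga != 0 by rewrite -cabs_gt0 (le_lt_trans (cabs_ge0 _) Dga).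
  have Dg : cabs (D / ga) < 1 by rewrite cabsM cabsV ltr_pdivrMr ?mul1r ?cabs_gt0.
  rewrite (winding_number_factors (m := 1) gw ga0 mz_lt1 Dg cos2piN cos2piN) // => t t01.
  by rewrite fact mulr1 einv; field; rewrite e0 ga0.
- have [ga0|ga0] := eqVneq ga 0.
    have D0 : D = 0 by apply/eqP; rewrite -cabs_eq0 -gaD ga0 cabs_eq0.
    by have := gnz 0; rewrite fact ga0 D0 mul0r addr0 mulr0 eqxx lexx ler01 => /(_ isT).
  have [t t01 et] : exists2 t, 0 <= t <= 1 & e t = - D / ga.
    by apply: expi_onto_circle; rewrite cabsM cabsN cabsV gaD mulfV // -gaD cabs_eq0.
  by have := gnz t t01; rewrite fact et mulrCA mulfV // mulr1 addNr mulr0 eqxx.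
Qed.

End Laurent.

(** * Decay estimates *)

Section Growth.
Variable R : realType.

Lemma exists_root_above (r : R) k : 0 <= r < 1 -> (0 < k)%N ->
  exists th : R, 0 < th < 1 /\ r < th ^+ k.
Proof.
move=> /andP[r0 r1] k0; set s := (1 + r) / 2.
have [s0 s1 rs] : [/\ 0 < s, s < 1 & r < s] by rewrite /s; split; lra.
exists (s `^ k%:R^-1); have th0 : 0 < s `^ k%:R^-1 by rewrite powR_gt0.
have thk : (s `^ k%:R^-1) ^+ k = s.
  by rewrite -powR_mulrn ?ltW // -powRrM mulVf ?powRr1 ?ltW // pnatr_eq0 -lt0n.
rewrite th0 thk rs; split => //; rewrite ltNge; apply/negP => /(exprn_ege1 k).
by rewrite thk leNgt s1.
Qed.

Lemma linear_geometric_le (r s : R) : 0 <= r -> r < s -> exists C : R, 0 <= C /\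
  forall j : nat, j.+1%:R * r ^+ j <= C * s ^+ j.
Proof.
move=> r0 rs; have s0 : 0 < s by apply: le_lt_trans rs.
set q := r / s.
have q0 : 0 <= q by rewrite divr_ge0 // ltW.
have q1 : q < 1 by rewrite ltr_pdivrMr ?mul1r.
exists (1 - q)^-1; split; first by rewrite invr_ge0 subr_ge0 ltW.
move=> j; rewrite -[r](divfK (lt0r_neq0 s0)) -/q exprMn mulrA.
apply: ler_wpM2r; first by rewrite exprn_ge0 // ltW.
have q1' : 0 < 1 - q by rewrite subr_gt0.
rewrite -(ler_pM2l q1') mulfV ?lt0r_neq0 //.
apply: (le_trans (y := (1 - q) * \sum_(i < j.+1) q ^+ i)).
  apply: ler_wpM2l; first exact: ltW.
  rewrite -[X in X%:R * _]card_ord -sum1_card natr_sum mulr_suml.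
  apply: ler_sum => i _; rewrite mul1r.
  by apply: ler_wiXn2l => //; [exact: ltW | rewrite -ltnS].
by rewrite -opprB mulNr -subrX1 opprB lerBlDr lerDl exprn_ge0.
Qed.

Lemma block_geometric_le (r : R) k : 0 <= r < 1 -> (0 < k)%N ->
  exists C th : R, 0 <= th < 1 /\
    forall n, (n %/ k).+1%:R * r ^+ (n %/ k) <= C * th ^+ n.
Proof.
move=> r01 k0; have [th [/andP[th0 th1] rth]] := exists_root_above r01 k0.
have [C [C0 hC]] := linear_geometric_le (proj1 (andP r01)) rth.
exists (C / th ^+ k), th; split=> [|n]; first by rewrite ltW.
apply: (le_trans (hC _)); rewrite -exprM -mulrA; apply: ler_wpM2l => //.
rewrite mulrC ler_pdivlMr ?exprn_gt0 // -exprD.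
by apply: ler_wiXn2l; rewrite ?ltW //; nia.
Qed.

End Growth.

Section Decay.
Variable R : realType.
Implicit Types (x y : nat -> R[i]).
Local Open Scope classical_set_scope.

Lemma rec2_bound y (m1 m2 : R[i]) (r : R) : 0 < r -> cabs m1 <= r -> cabs m2 <= r ->
  (forall j, y j.+2 = (m1 + m2) * y j.+1 - m1 * m2 * y j) ->
  forall j, cabs (y j) <= r ^+ j * (cabs (y 0) + j%:R * (cabs (y 1 - m1 * y 0) / r)).
Proof.
move=> r0 h1 h2 hrec; set d := y 1 - m1 * y 0.
have hd j : y j.+1 - m1 * y j = m2 ^+ j * d.
  elim: j => [|j IH]; first by rewrite expr0 mul1r.
  by rewrite exprS -mulrA -IH hrec; ring.
have d0 : 0 <= cabs d / r by rewrite divr_ge0 ?cabs_ge0 ?ltW.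
elim=> [|j IH]; first by rewrite expr0 mul1r mul0r addr0.
rewrite -[y j.+1](subrK (m1 * y j)) hd.
apply: (le_trans (cabsD _ _)); rewrite cabsM cabsX cabsM.
have -> : r ^+ j.+1 * (cabs (y 0) + j.+1%:R * (cabs d / r))
    = r * (r ^+ j * (cabs (y 0) + j%:R * (cabs d / r))) + r ^+ j * cabs d.
  by rewrite exprS mulrSr; field; rewrite gt_eqF.
rewrite addrC; apply: lerD; first by apply: ler_pM; rewrite ?cabs_ge0.
by apply: ler_wpM2r; rewrite ?cabs_ge0 // lerXn2r // nnegrE ?cabs_ge0 // ltW.
Qed.

Lemma interleaved_rec2_bound x (m1 m2 : R[i]) (r : R) k : (0 < k)%N -> 0 < r ->
  cabs m1 <= r -> cabs m2 <= r ->
  (forall n, x (n + 2 * k)%N = (m1 + m2) * x (n + k)%N - m1 * m2 * x n) ->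
  exists K : R, 0 <= K /\
    forall n, cabs (x n) <= K * (n %/ k).+1%:R * r ^+ (n %/ k).
Proof.
move=> k0 r0 h1 h2 hx.
set F := fun n => cabs (x n) + cabs (x (n + k)%N - m1 * x n) / r.
have F0 n : 0 <= F n by rewrite addr_ge0 ?divr_ge0 ?cabs_ge0 ?ltW.
exists (\sum_(i < k) F i); split=> [|n]; first by rewrite sumr_ge0.
set j := (n %/ k)%N; have nk := ltn_pmod n k0.
have xn : x n = x (n %% k + j * k)%N by rewrite /j addnC -divn_eq.
have hy i : x (n %% k + i.+2 * k)%N
    = (m1 + m2) * x (n %% k + i.+1 * k)%N - m1 * m2 * x (n %% k + i * k)%N.
  have -> : (n %% k + i.+2 * k = n %% k + i * k + 2 * k)%N by lia.
  by rewrite hx; congr (_ * x _ - _); lia.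
have := rec2_bound (y := fun i => x (n %% k + i * k)%N) r0 h1 h2 hy j.
rewrite /= mul0n mul1n addn0 -xn => /le_trans; apply.
rewrite mulrC; apply: ler_wpM2r; first by rewrite exprn_ge0 ?ltW.
apply: (le_trans (y := F (n %% k)%N * j.+1%:R)).
  rewrite /F mulrSr; have := ler0n R j; have := cabs_ge0 (x (n %% k)%N).
  have : 0 <= cabs (x (n %% k + k)%N - m1 * x (n %% k)%N) / r by rewrite divr_ge0 ?cabs_ge0 ?ltW.
  nra.
by apply: ler_wpM2r; rewrite // (bigD1 (Ordinal nk)) //= lerDl sumr_ge0.
Qed.

Lemma l2_geometric x (K q : R) : 0 <= q < 1 ->
  (forall n, cabs (x n) <= K * q ^+ n) -> l2 x.
Proof.
move=> /andP[q0 q1] hx.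
have q2 : 0 < 1 - q ^+ 2 by rewrite subr_gt0 expr_lt1.
apply: (@le_lt_trans _ _ ((K ^+ 2 / (1 - q ^+ 2))%:E)); last by rewrite ltry.
apply: lime_le; first by apply: is_cvg_nneseries => *; rewrite lee_fin exprn_ge0 ?cabs_ge0.
apply: nearW => N; rewrite sumEFin lee_fin.
apply: (@le_trans _ _ (\sum_(0 <= i < N) K ^+ 2 * (q ^+ 2) ^+ i)).
  apply: ler_sum => i _; rewrite -exprM mulnC exprM -exprMn.
  by rewrite lerXn2r ?nnegrE ?cabs_ge0 // (le_trans (cabs_ge0 _) (hx i)).
rewrite -mulr_sumr big_mkord ler_wpM2l ?sqr_ge0 //.
rewrite -(ler_pM2l q2) mulfV ?gt_eqF // -opprB mulNr -subrX1 opprB.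
by rewrite lerBlDr lerDl exprn_ge0 ?sqr_ge0.
Qed.

Lemma cabs_attains_max x (K q : R) : 0 <= q < 1 ->
  (forall n, cabs (x n) <= K * q ^+ n) -> x 0 != 0 ->
  exists i0, forall i, cabs (x i) <= cabs (x i0).
Proof.
move=> /andP[q0 q1] hx x0; have c0 : 0 < cabs (x 0) by rewrite cabs_gt0.
have [N _ hN] : \forall N \near \oo, `|K * q ^+ N| < cabs (x 0).
  apply: cvgr0_norm_lt => //; rewrite -(mulr0 K).
  by apply: cvgM; [exact: cvg_cst | apply: cvg_expr; rewrite ger0_norm].
pose i0 := [arg max_(i > (ord0 : 'I_N.+1)) cabs (x i)]%O.
have hi0 (i : 'I_N.+1) : cabs (x i) <= cabs (x i0).
  by rewrite /i0; case: arg_maxP => // j _; apply.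
exists i0 => i; have [iN|Ni] := leqP i N; first exact: (hi0 (Ordinal (iN : i < N.+1)%N)).
have K0 : 0 <= K by have := le_trans (cabs_ge0 _) (hx 0); rewrite expr0 mulr1.
apply: (le_trans (hx i)); apply/ltW/(le_lt_trans _ (lt_le_trans (hN N (leqnn N)) (hi0 ord0))).
rewrite ger0_norm ?mulr_ge0 ?exprn_ge0 //; apply: ler_wpM2l => //.
by apply: ler_wiXn2l => //; [exact: ltW | exact: ltnW].
Qed.

Lemma block_decay_normalized x (K r : R) k : (0 < k)%N -> 0 <= r < 1 -> x 0 != 0 ->
  (forall n, cabs (x n) <= K * (n %/ k).+1%:R * r ^+ (n %/ k)) ->
  exists2 Cst : R, 0 < Cst & l2 x /\ exists i0,
    (forall i, cabs (x i) <= cabs (x i0)) /\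
    forall n, cabs (x n) / cabs (x i0) <= Cst * (n %/ k).+1%:R * r ^+ (n %/ k).
Proof.
move=> k0 r01 x0 hK; have [r0 _] := andP r01.
have K0 : 0 <= K by have := le_trans (cabs_ge0 _) (hK 0); rewrite div0n !mulr1.
have [C [th [th01 hth]]] := block_geometric_le r01 k0.
have geo n : cabs (x n) <= K * C * th ^+ n.
  by apply: (le_trans (hK n)); rewrite -!mulrA; apply: ler_wpM2l.
have [i0 hi0] := cabs_attains_max th01 geo x0.
have xi0 : 0 < cabs (x i0) by apply: lt_le_trans (hi0 0); rewrite cabs_gt0.
exists (K / cabs (x i0) + 1).
  by apply: lt_le_trans ltr01 _; rewrite lerDr divr_ge0 // ltW.
split; first exact: l2_geometric th01 geo.
exists i0; split=> // n; rewrite ler_pdivrMr //; apply: (le_trans (hK n)).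
have -> : (K / cabs (x i0) + 1) * (n %/ k).+1%:R * r ^+ (n %/ k) * cabs (x i0)
    = (K / cabs (x i0) + 1) * cabs (x i0) * ((n %/ k).+1%:R * r ^+ (n %/ k)) by ring.
rewrite -mulrA; apply: ler_wpM2r; first by rewrite mulr_ge0 ?exprn_ge0.
by rewrite mulrDl divfK ?gt_eqF // mul1r lerDl ltW.
Qed.

End Decay.

(** * The eigenvector *)

Lemma sum_prod_split (F : closedFieldType) (t d : F) :
  exists m1 m2 : F, t = m1 + m2 /\ d = m1 * m2.
Proof.
have [m hm] := @solve_monicpoly F 2 (fun i => if i == 0 then - d else t) isT.
rewrite !big_ord_recr big_ord0 /= add0r mulr1 expr1 in hm.
exists m, (t - m); split; first by ring.
by rewrite mulrBr -expr2 hm; ring.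
Qed.

Lemma divn_ceil_succ n k : (0 < k)%N -> ((n.+1 + k.-1) %/ k)%N = (n %/ k).+1.
Proof. by move=> k0; rewrite addSn -addnS prednK // divnDr ?dvdnn // divnn k0 addn1. Qed.

Section ToeplitzEigenvector.
Variables (R : realType) (k : nat) (a b c : nat -> R[i]) (lam : R[i]) (w : int).
Hypotheses (k_gt0 : (0 < k)%N) (b_neq0 : forall j, (j < k)%N -> b j != 0).

Lemma eigen_rec_kToeplitz s : eigen_rec k a b c lam s -> s 0 = 0 ->
  forall n, kToeplitz k a b c (fun n => s n.+1) n = lam * s n.+1.
Proof.
move=> hs s0 n; have bn := b_neq0 (ltn_pmod n k_gt0).
rewrite /kToeplitz hs; case: n bn => [|n] bn.
  by rewrite s0; field.
by rewrite addSn -addnS prednK // modnDr; field.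
Qed.
Hypotheses (wind_w : winding_number (char_curve k a b c lam) w) (w_lt0 : w < 0).

Lemma symbol_root_outside z : z != 0 -> \det (symbol k a b c z - lam%:M) = 0 -> 1 < cabs z.
Proof.
move=> z0 dz; have [al [be [ga hdet]]] := det_symbol_laurent a b c lam k_gt0.
rewrite ltNge; apply: contraTN w_lt0 => z1; rewrite -leNgt.
have root : al + be * z^-1 + ga * z = 0 by rewrite -hdet.
apply: (laurent_winding_ge0 _ wind_w z0 z1 root) => t.
by rewrite /char_curve hdet // expi_neq0.
Qed.

Lemma floquet_multiplier_lt1 mu :
  mu ^+ 2 - mono_tr k a b c lam * mu + mono_det k a b c lam = 0 -> cabs mu < 1.
Proof.
move=> hmu; have [->|mu0] := eqVneq mu 0; first by rewrite (cabs_real (lexx 0)) ltr01.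
have [s [hs s01 hsk]] := floquet_solution k_gt0 hmu.
have := symbol_root_outside (invr_neq0 mu0) (floquet_symbol_det k_gt0 b_neq0 mu0 hs s01 hsk).
by rewrite cabsV invf_gt1 ?cabs_gt0.
Qed.

Lemma eigen_rec_decay s m : eigen_rec k a b c lam s ->
  exists r K : R, [/\ 0 <= r < 1, 0 <= K &
    forall n, cabs (s (m + n)%N) <= K * (n %/ k).+1%:R * r ^+ (n %/ k)].
Proof.
move=> hs.
have [mu1 [mu2 [htr hdet]]] := sum_prod_split (mono_tr k a b c lam) (mono_det k a b c lam).
have mu1_lt1 : cabs mu1 < 1 by apply: floquet_multiplier_lt1; rewrite htr hdet; ring.
have mu2_lt1 : cabs mu2 < 1 by apply: floquet_multiplier_lt1; rewrite htr hdet; ring.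
set rho := Num.max (cabs mu1) (cabs mu2).
have [h1 h2] : cabs mu1 <= rho /\ cabs mu2 <= rho by split; rewrite le_max lexx ?orbT.
have rho1 : rho < 1 by rewrite gt_max mu1_lt1 mu2_lt1.
have rho0 : 0 <= rho := le_trans (cabs_ge0 _) h1.
(* Each residue class of [s] mod [k] solves the recurrence with characteristic
   roots [mu1], [mu2]. *)
have hx n : s (m + (n + 2 * k))%N
    = (mu1 + mu2) * s (m + (n + k))%N - mu1 * mu2 * s (m + n)%N.
  by have := eigen_rec_cayley_hamilton k_gt0 hs (m + n); rewrite -!addnA htr hdet.
have [r0 hr] : 0 < (1 + rho) / 2 /\ rho <= (1 + rho) / 2 by split; lra.
have [K [K0 hK]] := interleaved_rec2_bound (x := fun n => s (m + n)%N) k_gt0 r0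
  (le_trans h1 hr) (le_trans h2 hr) hx.
by exists ((1 + rho) / 2), K; split => //; apply/andP; split; lra.
Qed.

End ToeplitzEigenvector.

Unset Implicit Arguments.
Set Strict Implicit.

Theorem theorem2p9 (R : realType) (k : nat) (a b c : nat -> R[i]) (lam : R[i]) :
  (0 < k)%N ->
  \prod_(j < k) c j != 0 ->
  \prod_(j < k) b j != 0 ->
  ~ ess_spectrum (kToeplitz k a b c) lam ->
  (exists w : int, winding_number (char_curve k a b c lam) w /\ w < 0) ->
  exists Cst : R, 0 < Cst /\
    exists x : nat -> R[i],
      [/\ l2 x, x <> (fun _ => 0),
          (forall n, kToeplitz k a b c x n = lam * x n) &
          exists rho : R, (0 <= rho < 1) /\
            exists i0 : nat, (forall i, cabs (x i) <= cabs (x i0)) /\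
              forall n : nat,
                cabs (x n) / cabs (x i0)
                <= Cst * ((n.+1 + k.-1) %/ k)%:R * rho ^+ ((n.+1 + k.-1) %/ k).-1].
Proof.
move=> k0 _ /prodf_neq0 bprod _ [w [wind w0]].
have b0 j : (j < k)%N -> b j != 0 by move=> jk; exact: (bprod (Ordinal jk)).
have hs := rec_sol_rec k a b c lam 0 1.
set x := fun n => rec_sol k a b c lam 0 1 n.+1.
have x0 : x 0 != 0 by rewrite oner_eq0.
have [r [K [r01 _ hK]]] := eigen_rec_decay k0 b0 wind w0 1 hs.
have [Cst Cst0 [l2x [i0 [hi0 hx]]]] := block_decay_normalized k0 r01 x0 hK.
exists Cst; split=> //; exists x; split=> //.
- by move/(congr1 (fun f => f 0))/eqP; rewrite oner_eq0.
- exact: eigen_rec_kToeplitz.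
- exists r; split=> //; exists i0; split=> // n.
  by rewrite divn_ceil_succ // succnK.
Qed.
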